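(* Let $f_i$ and $f_j$ be two finite set (random finite set) densities on the finite subsets of $\mathbb{R}^d$, with cardinality probability mass functions $p_i,p_j$ on $\{0,1,2,\ldots\}$ and localisation densities $\rho_{i,n},\rho_{j,n}$ ($n\ge 1$), and let $\omega\in[0,1]$. Let $z_\omega(n)$, $N_\omega$ and the fused cardinality pmf $p_\omega$ be as defined in the context. Fix a cardinality $n$. Then the inconsistency condition $$p_\omega(n)<\min\{p_i(n),p_j(n)\}$$ holds if $$z_\omega(n)<\frac{\sum_{n'\neq n} p_i^{(1-\omega)}(n')\,p_j^{\omega}(n')\,z_\omega(n')}{\dfrac{p_i^{(1-\omega)}(n)\,p_j^{\omega}(n)}{\min\{p_i(n),p_j(n)\}}-p_i^{(1-\omega)}(n)\,p_j^{\omega}(n)},$$ where the right-hand side is assumed to be well defined (i.e. $\min\{p_i(n),p_j(n)\}>0$ and the denominator is nonzero).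
   Context: A finite set density $f$ on finite subsets $X=\{x_1,\ldots,x_n\}\subset\mathbb{R}^d$ is written $f(X)=p(|X|)\,n!\,\rho_n(x_1,\ldots,x_n)$, where $p$ is a probability mass function on $\{0,1,2,\ldots\}$ (the cardinality distribution) and, for each $n\ge1$, $\rho_n$ is a probability density on $(\mathbb{R}^d)^n$ symmetric in its arguments (the localisation density). For $f_i=(p_i,\{\rho_{i,n}\})$, $f_j=(p_j,\{\rho_{j,n}\})$ and $\omega\in[0,1]$, define $z_\omega(0)=1$ and for $n\ge1$ $$z_\omega(n)=\int_{(\mathbb{R}^d)^n}\rho_{i,n}^{(1-\omega)}(x_1,\ldots,x_n)\,\rho_{j,n}^{\omega}(x_1,\ldots,x_n)\,\mathrm{d}x_1\cdots\mathrm{d}x_n,$$ $$N_\omega=\sum_{n'=0}^\infty p_i^{(1-\omega)}(n')\,p_j^{\omega}(n')\,z_\omega(n'),\qquad p_\omega(n)=\frac{1}{N_\omega}p_i^{(1-\omega)}(n)\,p_j^{\omega}(n)\,z_\omega(n).$$ $p_\omega$ is the cardinality distribution of the exponential mixture density (normalised weighted geometric mean) $f_\omega\propto f_i^{1-\omega}f_j^{\omega}$, normalised with respect to the set integral. *)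

From HB Require Import structures.
From mathcomp Require Import all_boot all_order all_algebra all_fingroup.
From mathcomp Require Import all_classical all_reals all_analysis.
Set Implicit Arguments. Unset Strict Implicit. Unset Printing Implicit Defensive.
Import Order.TTheory GRing.Theory Num.Theory.
Local Open Scope ring_scope.
Local Open Scope ereal_scope.

Fixpoint iint (R : realType) (T : Type) (I : (T -> \bar R) -> \bar R) (k : nat)
  : (k.-tuple T -> \bar R) -> \bar R :=
  match k return (k.-tuple T -> \bar R) -> \bar R with
  | 0 => fun F => F [tuple]
  | k'.+1 => fun F => I (fun x => iint I (fun t : k'.-tuple T => F [tuple of x :: t]))
  end.

Definition leb_int (R : realType) (f : R -> \bar R) : \bar R :=
  \int[@lebesgue_measure R]_x f x.

(* Lebesgue integral on R^d, points of R^d being d-tuples of reals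
   (by Tonelli, for nonnegative measurable integrands this iterated integral
   is the integral w.r.t. d-dimensional Lebesgue measure). *)
Definition intRd (R : realType) (d : nat) (g : d.-tuple R -> \bar R) : \bar R :=
  iint (@leb_int R) g.

Definition intRdn (R : realType) (d n : nat)
  (F : n.-tuple (d.-tuple R) -> \bar R) : \bar R :=
  iint (@intRd R d) F.

Definition is_pmf (R : realType) (p : nat -> R) : Prop :=
  (forall n, 0 <= p n)%R /\ \sum_(0 <= n <oo) (p n)%:E = 1.

Definition is_loc_density (R : realType) (d n : nat)
  (rho : n.-tuple (d.-tuple R) -> R) : Prop :=
  measurable_fun setT rho /\
  (forall x, 0 <= rho x)%R /\
  intRdn (fun x => (rho x)%:E) = 1 /\
  (forall (s : 'S_n) (x : n.-tuple (d.-tuple R)),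
      rho [tuple tnth x (s i) | i < n] = rho x).

Definition z_omega (R : realType) (d : nat)
  (rho_i rho_j : forall n, n.-tuple (d.-tuple R) -> R) (w : R) (n : nat) : \bar R :=
  if n is 0 then 1
  else intRdn (fun x => ((rho_i n x) `^ (1 - w) * (rho_j n x) `^ w)%:E).

Definition cw (R : realType) (p_i p_j : nat -> R) (w : R) (n : nat) : R :=
  (p_i n `^ (1 - w) * p_j n `^ w)%R.

Definition N_omega (R : realType) (d : nat) (p_i p_j : nat -> R)
  (rho_i rho_j : forall n, n.-tuple (d.-tuple R) -> R) (w : R) : \bar R :=
  \sum_(0 <= n' <oo) ((cw p_i p_j w n')%:E * z_omega rho_i rho_j w n').

Definition p_omega (R : realType) (d : nat) (p_i p_j : nat -> R)
  (rho_i rho_j : forall n, n.-tuple (d.-tuple R) -> R) (w : R) (n : nat) : \bar R :=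
  ((cw p_i p_j w n)%:E * z_omega rho_i rho_j w n) / N_omega p_i p_j rho_i rho_j w.

From HB Require Import structures.
From mathcomp Require Import all_boot all_order all_algebra all_fingroup.
From mathcomp Require Import all_classical all_reals all_analysis.
From mathcomp Require Import ring lra.
Import Order.TTheory GRing.Theory Num.Theory.
Local Open Scope ring_scope.
Local Open Scope ereal_scope.

(* Write c = p_i^(1-w)(n) p_j^w(n), z = z_w(n), m = min(p_i(n), p_j(n)) and S
   for the sum over n' <> n, so that p_w(n) = c z / (c z + S).  Since
   c/m - c = c (1 - m) / m, the nonzero denominator forces c > 0 and m < 1,
   and the hypothesis on z unfolds to c z (1 - m) < S m, i.e. c z < m (c z + S). *)

Lemma iint_ge0 (R : realType) (T : Type) (I : (T -> \bar R) -> \bar R) :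
  (forall f, (forall x, 0 <= f x) -> 0 <= I f) ->
  forall k (F : k.-tuple T -> \bar R), (forall t, 0 <= F t) -> 0 <= iint I F.
Proof.
move=> I_ge0; elim=> [|k IHk] F F_ge0 /=; first exact: F_ge0.
by apply: I_ge0 => x; apply: IHk => t; exact: F_ge0.
Qed.

Lemma leb_int_ge0 (R : realType) (f : R -> \bar R) :
  (forall x, 0 <= f x) -> 0 <= leb_int f.
Proof. by move=> f_ge0; apply: integral_ge0 => x _; exact: f_ge0. Qed.

Lemma intRdn_ge0 (R : realType) (d n : nat) (F : n.-tuple (d.-tuple R) -> \bar R) :
  (forall t, 0 <= F t) -> 0 <= intRdn F.
Proof.
apply: iint_ge0 => f f_ge0; apply: iint_ge0 => //; exact: leb_int_ge0.
Qed.

Lemma z_omega_ge0 (R : realType) (d : nat)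
    (rho_i rho_j : forall n, n.-tuple (d.-tuple R) -> R) (w : R) (n : nat) :
  0 <= z_omega rho_i rho_j w n.
Proof.
case: n => [|n] /=; first exact: lee01.
by apply: intRdn_ge0 => t; rewrite lee_fin mulr_ge0 // powR_ge0.
Qed.

Lemma cw_ge0 (R : realType) (p_i p_j : nat -> R) (w : R) (n : nat) :
  (0 <= cw p_i p_j w n)%R.
Proof. by rewrite mulr_ge0 // powR_ge0. Qed.

Lemma pmf_le1 (R : realType) (p : nat -> R) (n : nat) : is_pmf p -> (p n <= 1)%R.
Proof.
move=> [p_ge0 p_sum1]; rewrite -lee_fin -p_sum1 (@nneseriesD1 _ _ n xpredT) //=.
  by rewrite leeDl // nneseries_ge0 // => k _; rewrite lee_fin.
by move=> k _; rewrite lee_fin.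
Qed.

Lemma N_omega_split (R : realType) (d : nat) (p_i p_j : nat -> R)
    (rho_i rho_j : forall n, n.-tuple (d.-tuple R) -> R) (w : R) (n : nat) :
  N_omega p_i p_j rho_i rho_j w =
  (cw p_i p_j w n)%:E * z_omega rho_i rho_j w n
  + \sum_(0 <= k <oo | k != n) ((cw p_i p_j w k)%:E * z_omega rho_i rho_j w k).
Proof.
rewrite /N_omega (@nneseriesD1 _ _ n xpredT) // => k _.
by rewrite mule_ge0 ?lee_fin ?cw_ge0 ?z_omega_ge0.
Qed.

Section FusedRatio.
Variable R : realFieldType.

Lemma div_sub_gt0 (c m : R) :
  (0 <= c)%R -> (0 < m <= 1)%R -> (c / m - c != 0)%R -> (0 < c / m - c)%R.
Proof.
move=> c_ge0 /andP[m_gt0 m_le1]; rewrite lt0r => -> /=.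
have -> : (c / m - c = c * (1 - m) / m)%R by field; rewrite gt_eqF.
by rewrite divr_ge0 ?mulr_ge0 ?subr_ge0 // ltW.
Qed.

Lemma ratio_lt (a s m : R) :
  (0 <= a)%R -> (0 <= s)%R -> (a * (1 - m) < s * m)%R -> (a / (a + s) < m)%R.
Proof.
move=> a_ge0 s_ge0 gap.
have as_gt0 : (0 < a + s)%R by rewrite lt0r addr_ge0 // andbT; apply/eqP; nra.
by rewrite ltr_pdivrMr //; nra.
Qed.

Lemma ratio_lt_ereal (a m : R) (S : \bar R) :
  (0 < m)%R -> (0 <= a)%R -> 0 <= S -> (a * (1 - m))%:E < S * m%:E ->
  a%:E / (a%:E + S) < m%:E.
Proof.
move=> m_gt0 a_ge0; case: S => [s| |] // S_ge0; last by rewrite addey // mule0 lte_fin.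
have s_ge0 : (0 <= s)%R by rewrite -lee_fin.
rewrite -EFinM lte_fin => gap.
have as_neq0 : (a + s != 0)%R by apply/eqP; nra.
by rewrite -EFinD inver (negbTE as_neq0) -EFinM lte_fin ratio_lt.
Qed.

Lemma fused_weight_lt (c m : R) (z S : \bar R) :
  (0 <= c)%R -> (0 < m <= 1)%R -> 0 <= z -> 0 <= S ->
  (c / m - c != 0)%R -> z < S * ((c / m - c)^-1)%:E ->
  (c%:E * z) / (c%:E * z + S) < m%:E.
Proof.
move=> c_ge0 m_range z_ge0 S_ge0 D_neq0.
have D_gt0 : (0 < c / m - c)%R by exact: div_sub_gt0.
have m_gt0 : (0 < m)%R by case/andP: m_range.
rewrite lte_pdivlMr // -(@lte_pmul2r _ m%:E) // => gap.
case: z z_ge0 gap => [z| |] // z_ge0; last first.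
  by rewrite gt0_mulye // gt0_mulye ?lte_fin // ltNge leey.
have {}z_ge0 : (0 <= z)%R by rewrite -lee_fin.
move=> gap; rewrite -EFinM ratio_lt_ereal ?mulr_ge0 //.
suff -> : (c * z * (1 - m) = z * (c / m - c) * m)%R by [].
by field; rewrite gt_eqF.
Qed.

End FusedRatio.

Theorem proposition1 (R : realType) (d : nat)
  (p_i p_j : nat -> R)
  (rho_i rho_j : forall n : nat, n.-tuple (d.-tuple R) -> R)
  (w : R) (n : nat) :
  is_pmf p_i -> is_pmf p_j ->
  (forall m, (0 < m)%N -> is_loc_density (rho_i m)) ->
  (forall m, (0 < m)%N -> is_loc_density (rho_j m)) ->
  (0 <= w <= 1)%R ->
  (0 < Num.min (p_i n) (p_j n))%R ->
  (cw p_i p_j w n / Num.min (p_i n) (p_j n) - cw p_i p_j w n != 0)%R ->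
  z_omega rho_i rho_j w n <
    (\sum_(0 <= n' <oo | n' != n)
        ((cw p_i p_j w n')%:E * z_omega rho_i rho_j w n'))
    * ((cw p_i p_j w n / Num.min (p_i n) (p_j n) - cw p_i p_j w n)^-1)%:E ->
  p_omega p_i p_j rho_i rho_j w n < (Num.min (p_i n) (p_j n))%:E.
Proof.
move=> pmf_i _ _ _ _ min_gt0.
have min_le1 : (Num.min (p_i n) (p_j n) <= 1)%R by rewrite ge_min pmf_le1.
rewrite /p_omega (N_omega_split _ _ _ _ _ _ _ n).
apply: fused_weight_lt.
- exact: cw_ge0.
- by rewrite min_gt0 min_le1.
- exact: z_omega_ge0.
- by apply: nneseries_ge0 => k _ _; rewrite mule_ge0 ?lee_fin ?cw_ge0 ?z_omega_ge0.
Qed.
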